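(* Let $\mathsf{X}$ be a small category and let $T:\mathbb{R}_{\ge 0}\to\mathsf{End}(\mathsf{X})$ be a strict monoidal functor, where $\mathbb{R}_{\ge0}$ is the poset category of nonnegative reals (a unique morphism $s\to t$ iff $s\le t$) with monoidal structure given by addition. Let $\mathrm{W}(t)=t$. Then for all $X,Y\in\mathsf{X}_0$, the flow interleaving distance $d^{\mathrm{Fl}}_T(X,Y)$ equals the $\mathbb{R}_{\ge0}$-interleaving distance $d_{T,\mathrm{W}}(X,Y)$.
   Context: $\mathsf{End}(\mathsf{X})$ is the strict monoidal category of endofunctors of $\mathsf{X}$ and natural transformations (tensor = composition / horizontal composition). Write $T_t=T(t)$ and $T(s\le t):T_s\Rightarrow T_t$ for the image of the morphism $s\le t$; strictness means $T_0=1_{\mathsf X}$, $T_{s+t}=T_sT_t$, and $T$ takes sums of morphisms to horizontal composites. A $t$-flow interleaving of $X,Y$ is a pair of morphisms $\phi:X\to T_t(Y)$, $\psi:Y\to T_t(X)$ with $T_t(\psi)\circ\phi=T(0\le 2t)_X$ and $T_t(\phi)\circ\psi=T(0\le 2t)_Y$; $d^{\mathrm{Fl}}_T(X,Y)=\inf\{t\ge0:\text{a } t\text{-flow interleaving exists}\}$. For $s,t\ge0$, $X$ and $Y$ are $(s,t)$-interleaved if there exist $\phi:X\to T_s(Y)$, $\psi:Y\to T_t(X)$ with $T_s(\psi)\circ\phi=T(0\le s+t)_X$ and $T_t(\phi)\circ\psi=T(0\le t+s)_Y$; then $d_{T,\mathrm{W}}(X,Y)=\inf\{\max\{s,t\}: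 X,Y\ (s,t)\text{-interleaved}\}$. Both infima of the empty set are $\infty$. *)

From Stdlib Require Import Reals.
From Coquelicot Require Import Coquelicot.
Open Scope R_scope.
Set Implicit Arguments.

Record Cat := {
  Ob :> Type;
  Hom : Ob -> Ob -> Type;
  cid : forall a, Hom a a;
  ccomp : forall a b c, Hom b c -> Hom a b -> Hom a c;
  ccomp_assoc : forall a b c d (h : Hom c d) (g : Hom b c) (f : Hom a b),
      ccomp h (ccomp g f) = ccomp (ccomp h g) f;
  ccomp_id_l : forall a b (f : Hom a b), ccomp (cid b) f = f;
  ccomp_id_r : forall a b (f : Hom a b), ccomp f (cid a) = f
}.
Arguments Hom {_} _ _.
Arguments cid {_} _.
Arguments ccomp {_ _ _ _} _ _.

Definition cast {C : Cat} {a b : Ob C} (e : a = b) : Hom a b :=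
  match e in _ = b' return Hom a b' with eq_refl => cid a end.

Record Endo (C : Cat) := {
  fobj :> Ob C -> Ob C;
  fmap : forall a b, Hom a b -> Hom (fobj a) (fobj b);
  fmap_id : forall a, fmap a a (cid a) = cid (fobj a);
  fmap_comp : forall a b c (g : Hom b c) (f : Hom a b),
      fmap a c (ccomp g f) = ccomp (fmap b c g) (fmap a b f)
}.
Arguments fmap {C} _ {a b} _.

(** * Strict monoidal functors T : (R_{>=0}, <=, +) -> (End C, o, 1_C).
    [Tf t] is T_t; [Teta s t x] is the component at x of T(s <= t) : T_s => T_t.
    Only values at nonnegative reals (and s <= t) are constrained/used. *)
Record Flow (C : Cat) := {
  Tf : R -> Endo C;
  Teta : forall (s t : R) (x : Ob C), Hom (Tf s x) (Tf t x);
  Teta_nat : forall s t (x y : Ob C) (f : Hom x y), 0 <= s -> s <= t ->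
      ccomp (fmap (Tf t) f) (Teta s t x) = ccomp (Teta s t y) (fmap (Tf s) f);
  Teta_id : forall t x, 0 <= t -> Teta t t x = cid (Tf t x);
  Teta_comp : forall s t u x, 0 <= s -> s <= t -> t <= u ->
      ccomp (Teta t u x) (Teta s t x) = Teta s u x;
  T0_obj : forall x, Tf 0 x = x;
  T0_map : forall x y (f : Hom x y),
      fmap (Tf 0) f = ccomp (cast (eq_sym (T0_obj y))) (ccomp f (cast (T0_obj x)));
  Tadd_obj : forall s t x, 0 <= s -> 0 <= t -> Tf (s + t) x = Tf s (Tf t x);
  Tadd_map : forall s t x y (f : Hom x y) (hs : 0 <= s) (ht : 0 <= t),
      fmap (Tf (s + t)) f =
      ccomp (cast (eq_sym (Tadd_obj y hs ht)))
            (ccomp (fmap (Tf s) (fmap (Tf t) f)) (cast (Tadd_obj x hs ht)));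
  (* strictness: T(s <= s' + t <= t') = T(s <= s') * T(t <= t') (horizontal composite) *)
  Tadd_eta : forall s s' t t' x (hs : 0 <= s) (hs' : 0 <= s') (ht : 0 <= t) (ht' : 0 <= t'),
      s <= s' -> t <= t' ->
      Teta (s + t) (s' + t') x =
      ccomp (cast (eq_sym (Tadd_obj x hs' ht')))
        (ccomp (ccomp (Teta s s' (Tf t' x)) (fmap (Tf s) (Teta t t' x)))
               (cast (Tadd_obj x hs ht)))
}.

Section Interleavings.
Variables (C : Cat) (T : Flow C).

(** T(0 <= s + t)_X viewed as a morphism X -> T_s T_t X (via T_0 = 1, T_{s+t} = T_s T_t). *)
Definition shift_unit (s t : R) (hs : 0 <= s) (ht : 0 <= t) (X : Ob C) :
    Hom X (Tf T s (Tf T t X)) :=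
  ccomp (cast (Tadd_obj T X hs ht))
        (ccomp (Teta T 0 (s + t) X) (cast (eq_sym (T0_obj T X)))).

Definition interleaved (s t : R) (X Y : Ob C) : Prop :=
  exists (hs : 0 <= s) (ht : 0 <= t)
         (phi : Hom X (Tf T s Y)) (psi : Hom Y (Tf T t X)),
    ccomp (fmap (Tf T s) psi) phi = shift_unit hs ht X /\
    ccomp (fmap (Tf T t) phi) psi = shift_unit ht hs Y.

Definition flow_interleaved (t : R) (X Y : Ob C) : Prop :=
  exists (ht : 0 <= t) (phi : Hom X (Tf T t Y)) (psi : Hom Y (Tf T t X)),
    ccomp (fmap (Tf T t) psi) phi = shift_unit ht ht X /\
    ccomp (fmap (Tf T t) phi) psi = shift_unit ht ht Y.

(** infima in [0, +oo]; Glb_Rbar of the empty set is p_infty *)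
Definition d_flow (X Y : Ob C) : Rbar :=
  Glb_Rbar (fun t => flow_interleaved t X Y).

Definition d_W (X Y : Ob C) : Rbar :=
  Glb_Rbar (fun m => exists s t, interleaved s t X Y /\ m = Rmax s t).

End Interleavings.

(** A t-flow interleaving is literally a (t,t)-interleaving.  Conversely an
    (s,t)-interleaving (phi, psi) can be widened: replacing phi by
    T(s <= s') o phi still gives an interleaving, because T(s <= s') commutes
    with the structure maps (strictness of T) and composes with the unit
    T(0 <= s + t).  Widening both sides to max s t turns every
    (s,t)-interleaving into a (max s t)-flow interleaving, so both distances
    are infima of the same set of reals. *)

From Stdlib Require Import Reals.
From Coquelicot Require Import Coquelicot.
From Stdlib Require Import ProofIrrelevance Lra.

Set Implicit Arguments.

Lemma cast_comp_sym (C : Cat) (a b : Ob C) (e : a = b) :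
  ccomp (cast e) (cast (eq_sym e)) = cid b.
Proof. destruct e; apply ccomp_id_l. Qed.

Section Widening.
Variables (C : Cat) (T : Flow C).

Lemma Teta_whisker_right (s s' t : R) (X : Ob C)
    (hs : 0 <= s) (hs' : 0 <= s') (ht : 0 <= t) (hss : s <= s') :
  ccomp (Teta T s s' (Tf T t X)) (cast (Tadd_obj T X hs ht)) =
  ccomp (cast (Tadd_obj T X hs' ht)) (Teta T (s + t) (s' + t) X).
Proof.
  rewrite (Tadd_eta T X hs hs' ht ht hss (Rle_refl t)).
  rewrite (Teta_id T X ht), fmap_id, ccomp_id_r.
  now rewrite ccomp_assoc, cast_comp_sym, ccomp_id_l.
Qed.

Lemma Teta_whisker_left (s s' t : R) (X : Ob C)
    (hs : 0 <= s) (hs' : 0 <= s') (ht : 0 <= t) (hss : s <= s') :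
  ccomp (fmap (Tf T t) (Teta T s s' X)) (cast (Tadd_obj T X ht hs)) =
  ccomp (cast (Tadd_obj T X ht hs')) (Teta T (t + s) (t + s') X).
Proof.
  rewrite (Tadd_eta T X ht ht hs hs' (Rle_refl t) hss).
  rewrite (Teta_id T _ ht), ccomp_id_l.
  now rewrite ccomp_assoc, cast_comp_sym, ccomp_id_l.
Qed.

Lemma shift_unit_widen_left (s s' t : R) (X : Ob C)
    (hs : 0 <= s) (hs' : 0 <= s') (ht : 0 <= t) (hss : s <= s') :
  ccomp (Teta T s s' (Tf T t X)) (shift_unit T hs ht X) = shift_unit T hs' ht X.
Proof.
  unfold shift_unit.
  rewrite (ccomp_assoc _ _ _ _ _ (Teta T s s' (Tf T t X))).
  rewrite (Teta_whisker_right X hs hs' ht hss), <- ccomp_assoc.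
  rewrite (ccomp_assoc _ _ _ _ _ (Teta T (s + t) (s' + t) X)).
  rewrite Teta_comp; [reflexivity | lra ..].
Qed.

Lemma shift_unit_widen_right (s s' t : R) (X : Ob C)
    (hs : 0 <= s) (hs' : 0 <= s') (ht : 0 <= t) (hss : s <= s') :
  ccomp (fmap (Tf T t) (Teta T s s' X)) (shift_unit T ht hs X) =
  shift_unit T ht hs' X.
Proof.
  unfold shift_unit.
  rewrite (ccomp_assoc _ _ _ _ _ (fmap (Tf T t) (Teta T s s' X))).
  rewrite (Teta_whisker_left X hs hs' ht hss), <- ccomp_assoc.
  rewrite (ccomp_assoc _ _ _ _ _ (Teta T (t + s) (t + s') X)).
  rewrite Teta_comp; [reflexivity | lra ..].
Qed.

Lemma interleaved_sym (s t : R) (X Y : Ob C) :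
  interleaved T s t X Y -> interleaved T t s Y X.
Proof.
  intros [hs [ht [phi [psi [Hphi Hpsi]]]]].
  now exists ht, hs, psi, phi.
Qed.

Lemma interleaved_widen_left (s s' t : R) (X Y : Ob C) :
  s <= s' -> interleaved T s t X Y -> interleaved T s' t X Y.
Proof.
  intros hss [hs [ht [phi [psi [Hphi Hpsi]]]]].
  assert (hs' : 0 <= s') by lra.
  exists hs', ht, (ccomp (Teta T s s' Y) phi), psi; split.
  - rewrite ccomp_assoc, (Teta_nat T _ _ psi hs hss), <- ccomp_assoc, Hphi.
    now apply shift_unit_widen_left.
  - rewrite fmap_comp, <- ccomp_assoc, Hpsi.
    now apply shift_unit_widen_right.
Qed.

Lemma interleaved_widen (s s' t t' : R) (X Y : Ob C) :
  s <= s' -> t <= t' -> interleaved T s t X Y -> interleaved T s' t' X Y.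
Proof.
  intros hss htt H.
  apply interleaved_sym, (interleaved_widen_left htt), interleaved_sym.
  exact (interleaved_widen_left hss H).
Qed.

Lemma flow_interleaved_iff (t : R) (X Y : Ob C) :
  flow_interleaved T t X Y <-> interleaved T t t X Y.
Proof.
  split.
  - intros [ht [phi [psi H]]]. now exists ht, ht, phi, psi.
  - intros [ht [ht' [phi [psi H]]]].
    (* [shift_unit] depends on the proofs of [0 <= t] through its casts. *)
    rewrite (proof_irrelevance _ ht' ht) in H.
    now exists ht, phi, psi.
Qed.

End Widening.

Theorem proposition3p9 (C : Cat) (T : Flow C) (X Y : Ob C) :
  d_flow T X Y = d_W T X Y.
Proof.
  unfold d_flow, d_W; apply Glb_Rbar_eqset; intro m; split.
  - intro Hflow. exists m, m; split.
    + now apply flow_interleaved_iff.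
    + now rewrite Rmax_left by lra.
  - intros [s [t [H ->]]].
    apply flow_interleaved_iff.
    exact (interleaved_widen (Rmax_l s t) (Rmax_r s t) H).
Qed.
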